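(* Let $H$ be a separable Hilbert space, $0<p<1$, and $T$ any nonzero bounded linear operator on $H$. Then there exists a frame $\{f_n\}$ for $H$ such that $\{\langle Tf_n,f_n\rangle\}\notin\ell^p$.
   Context: A sequence $\{f_n\}$ in $H$ is a frame if there are constants $0<C_1\le C_2$ such that $C_1\|f\|^2\le\sum_n|\langle f,f_n\rangle|^2\le C_2\|f\|^2$ for all $f\in H$. *)

From Stdlib Require Import Reals Lra.
Open Scope R_scope.

Record Cplx := mkC { re : R; im : R }.
Definition Czero : Cplx := mkC 0 0.
Definition Cone : Cplx := mkC 1 0.
Definition Cadd (a b : Cplx) : Cplx := mkC (re a + re b) (im a + im b).
Definition Cmul (a b : Cplx) : Cplx :=
  mkC (re a * re b - im a * im b) (re a * im b + im a * re b).
Definition Cconj (a : Cplx) : Cplx := mkC (re a) (- im a).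
Definition Cmod (a : Cplx) : R := sqrt (re a * re a + im a * im a).

(** Complex inner-product spaces (inner product linear in the first
    argument, conjugate-linear in the second). *)
Record InnerProductSpace := {
  carrier :> Type;
  vzero : carrier;
  vadd : carrier -> carrier -> carrier;
  vopp : carrier -> carrier;
  vscal : Cplx -> carrier -> carrier;
  inner : carrier -> carrier -> Cplx;
  vaddA : forall x y z, vadd x (vadd y z) = vadd (vadd x y) z;
  vaddC : forall x y, vadd x y = vadd y x;
  vadd0 : forall x, vadd x vzero = x;
  vaddN : forall x, vadd x (vopp x) = vzero;
  vscalA : forall a b x, vscal a (vscal b x) = vscal (Cmul a b) x;
  vscal1 : forall x, vscal Cone x = x;
  vscalDl : forall a b x, vscal (Cadd a b) x = vadd (vscal a x) (vscal b x);
  vscalDr : forall a x y, vscal a (vadd x y) = vadd (vscal a x) (vscal a y);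
  inner_addl : forall x y z, inner (vadd x y) z = Cadd (inner x z) (inner y z);
  inner_scall : forall a x y, inner (vscal a x) y = Cmul a (inner x y);
  inner_conj : forall x y, inner y x = Cconj (inner x y);
  inner_pos : forall x, 0 <= re (inner x x);
  inner_def : forall x, re (inner x x) = 0 -> x = vzero
}.

Section HS.
Variable H : InnerProductSpace.

Definition vnorm (x : H) : R := sqrt (re (inner H x x)).
Definition vsub (x y : H) : H := vadd H x (vopp H y).

Definition complete : Prop :=
  forall u : nat -> H,
    (forall eps, eps > 0 -> exists N, forall m n, (m >= N)%nat -> (n >= N)%nat ->
        vnorm (vsub (u m) (u n)) < eps) ->
    exists l : H, forall eps, eps > 0 -> exists N, forall n, (n >= N)%nat ->
        vnorm (vsub (u n) l) < eps.

Definition separable : Prop :=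
  exists d : nat -> H, forall x eps, eps > 0 -> exists n, vnorm (vsub x (d n)) < eps.

Definition bounded_linear (T : H -> H) : Prop :=
  (forall x y, T (vadd H x y) = vadd H (T x) (T y)) /\
  (forall a x, T (vscal H a x) = vscal H a (T x)) /\
  (exists M, forall x, vnorm (T x) <= M * vnorm x).

Definition is_frame (f : nat -> H) : Prop :=
  exists C1 C2, 0 < C1 /\ C1 <= C2 /\
    forall x : H, exists S,
      infinite_sum (fun n => (Cmod (inner H x (f n)))^2) S /\
      C1 * (vnorm x)^2 <= S /\ S <= C2 * (vnorm x)^2.
End HS.

(** t^p for t >= 0 (with 0^p = 0 for p > 0) *)
Definition rpow (t p : R) : R := if Rlt_dec 0 t then Rpower t p else 0.

Definition in_lp (p : R) (a : nat -> Cplx) : Prop :=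
  exists S, infinite_sum (fun n => rpow (Cmod (a n)) p) S.

(* By polarization a nonzero T has a vector u with <T u, u> <> 0.
   Gram-Schmidt applied to u followed by a dense sequence of H gives an
   orthonormal sequence (e_k) (some e_k may vanish) with e_0 = u/|u| whose
   Bessel sums sum_{k<N} |<x, e_k>|^2 approximate |x|^2 from below.  Put
   r = 2^(-1/p) and t_k = r^j for 2^j <= k+1 < 2^(j+1).  Since 2r < 1,
   sum t_k <= 1/(1-2r), whereas t_k^p = 2^(-j) makes sum t_k^p diverge.
   The sequence f_(2k) = e_k, f_(2k+1) = sqrt(t_k) e_0 is a frame with
   bounds 1 and 1 + 1/(1-2r), and <T f_(2k+1), f_(2k+1)> = t_k <T e_0, e_0>,
   so the diagonal is not p-summable. *)

From Stdlib Require Import Reals Lra Lia Classical.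
Open Scope R_scope.

Lemma Cplx_ext (a b : Cplx) : re a = re b -> im a = im b -> a = b.
Proof. destruct a, b; simpl; intros; subst; reflexivity. Qed.

Ltac cplx_eq := apply Cplx_ext; simpl; try ring; try lra.

Lemma Cmod_sq (z : Cplx) : Cmod z ^ 2 = re z * re z + im z * im z.
Proof. unfold Cmod. apply pow2_sqrt. nra. Qed.

Lemma Cmod_pos (z : Cplx) : z <> Czero -> 0 < Cmod z.
Proof.
  intros Hz. unfold Cmod. apply sqrt_lt_R0. destruct z as [a b]; simpl.
  destruct (Req_dec a 0), (Req_dec b 0); subst; try nra.
  exfalso; apply Hz; reflexivity.
Qed.

Lemma Cmod_scale (s : R) (z : Cplx) :
  0 <= s -> Cmod (mkC (s * re z) (s * im z)) = s * Cmod z.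
Proof.
  intros Hs. unfold Cmod; simpl.
  replace (s * re z * (s * re z) + s * im z * (s * im z))
    with ((s * s) * (re z * re z + im z * im z)) by ring.
  rewrite sqrt_mult by nra. rewrite sqrt_square by lra. reflexivity.
Qed.

Section InnerProductAlgebra.
Context {H : InnerProductSpace}.

Lemma inner_0l (y : H) : inner H (vzero H) y = Czero.
Proof.
  pose proof (inner_addl H (vzero H) (vzero H) y) as E.
  rewrite vadd0 in E. destruct (inner H (vzero H) y) as [a b].
  unfold Cadd in E; simpl in E. injection E; intros. cplx_eq.
Qed.

Lemma inner_0r (y : H) : inner H y (vzero H) = Czero.
Proof. rewrite inner_conj, inner_0l. cplx_eq. Qed.

Lemma inner_addr (x y z : H) :
  inner H x (vadd H y z) = Cadd (inner H x y) (inner H x z).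
Proof. rewrite inner_conj, inner_addl, (inner_conj H y x), (inner_conj H z x). cplx_eq. Qed.

Lemma inner_scalr (a : Cplx) (x y : H) :
  inner H x (vscal H a y) = Cmul (Cconj a) (inner H x y).
Proof. rewrite inner_conj, inner_scall, (inner_conj H y x). cplx_eq. Qed.

Lemma inner_oppl (x y : H) :
  inner H (vopp H x) y = mkC (- re (inner H x y)) (- im (inner H x y)).
Proof.
  pose proof (inner_addl H x (vopp H x) y) as E. rewrite vaddN, inner_0l in E.
  destruct (inner H x y), (inner H (vopp H x) y). unfold Cadd in E; simpl in *.
  injection E; intros. cplx_eq.
Qed.

Lemma inner_subl (x y z : H) :
  inner H (vsub H x y) z =
  mkC (re (inner H x z) - re (inner H y z)) (im (inner H x z) - im (inner H y z)).
Proof. unfold vsub. rewrite inner_addl, inner_oppl. cplx_eq. Qed.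

Lemma inner_subr (x y z : H) :
  inner H z (vsub H x y) =
  mkC (re (inner H z x) - re (inner H z y)) (im (inner H z x) - im (inner H z y)).
Proof. rewrite inner_conj, inner_subl, (inner_conj H x z), (inner_conj H y z). cplx_eq. Qed.

Lemma im_inner_self (x : H) : im (inner H x x) = 0.
Proof. pose proof (inner_conj H x x) as E. destruct (inner H x x). injection E. simpl. lra. Qed.

Lemma re_inner_sym (x y : H) : re (inner H x y) = re (inner H y x).
Proof. rewrite inner_conj. reflexivity. Qed.

Lemma re_inner_sub_self (a b : H) :
  re (inner H (vsub H a b) (vsub H a b)) =
  re (inner H a a) - 2 * re (inner H a b) + re (inner H b b).
Proof. rewrite inner_subl, !inner_subr. simpl. rewrite (re_inner_sym b a). ring. Qed.

Lemma vscal_0r (a : Cplx) : vscal H a (vzero H) = vzero H.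
Proof. apply inner_def. rewrite inner_scall, inner_scalr, inner_0r. simpl. ring. Qed.

Lemma vopp_0 : vopp H (vzero H) = vzero H.
Proof. rewrite <- (vadd0 H (vopp H (vzero H))), vaddC, vaddN. reflexivity. Qed.

Lemma vnorm_sq (x : H) : vnorm H x ^ 2 = re (inner H x x).
Proof. unfold vnorm. apply pow2_sqrt, inner_pos. Qed.

Lemma inner_self_pos (x y : H) : inner H y x <> Czero -> 0 < re (inner H x x).
Proof.
  intros Hxy. destruct (inner_pos H x) as [P|P]; auto. exfalso. apply Hxy.
  rewrite (inner_def H x (eq_sym P)), inner_0r. reflexivity.
Qed.

Lemma diag_real_scale (T : H -> H) (s : R) (x : H) :
  (forall a y, T (vscal H a y) = vscal H a (T y)) ->
  inner H (T (vscal H (mkC s 0) x)) (vscal H (mkC s 0) x) =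
  mkC (s * s * re (inner H (T x) x)) (s * s * im (inner H (T x) x)).
Proof.
  intros Hscal. rewrite Hscal, inner_scall, inner_scalr.
  destruct (inner H (T x) x). cplx_eq.
Qed.

End InnerProductAlgebra.

Fixpoint vsum {H : InnerProductSpace} (g : nat -> H) (n : nat) : H :=
  match n with O => vzero H | S m => vadd H (vsum g m) (g m) end.
Fixpoint Csum (g : nat -> Cplx) (n : nat) : Cplx :=
  match n with O => Czero | S m => Cadd (Csum g m) (g m) end.
Fixpoint psum (g : nat -> R) (n : nat) : R :=
  match n with O => 0 | S m => psum g m + g m end.

Section FiniteSums.
Context {H : InnerProductSpace}.

Lemma inner_vsum_l (g : nat -> H) n z :
  inner H (vsum g n) z = Csum (fun k => inner H (g k) z) n.
Proof. induction n; simpl. apply inner_0l. rewrite inner_addl, IHn; reflexivity. Qed.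

Lemma inner_vsum_r (g : nat -> H) n z :
  inner H z (vsum g n) = Csum (fun k => inner H z (g k)) n.
Proof. induction n; simpl. apply inner_0r. rewrite inner_addr, IHn; reflexivity. Qed.

Lemma vsum_ext (g g' : nat -> H) n :
  (forall k, (k < n)%nat -> g k = g' k) -> vsum g n = vsum g' n.
Proof. induction n; simpl; intros E; auto. rewrite IHn, E; auto. Qed.

End FiniteSums.

Lemma Csum_zero g n : (forall k, (k < n)%nat -> g k = Czero) -> Csum g n = Czero.
Proof. induction n; simpl; intros E; auto. rewrite IHn, E; auto. cplx_eq. Qed.

Lemma Csum_single g n j : (j < n)%nat ->
  (forall k, (k < n)%nat -> k <> j -> g k = Czero) -> Csum g n = g j.
Proof.
  induction n; intros Hj E; [lia|]. simpl.
  destruct (Nat.eq_dec j n) as [->|Hne].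
  - rewrite Csum_zero by (intros; apply E; lia). destruct (g n); cplx_eq.
  - rewrite IHn, (E n) by (try intros; try apply E; lia). destruct (g j); cplx_eq.
Qed.

Lemma re_Csum g n : re (Csum g n) = psum (fun k => re (g k)) n.
Proof. induction n; simpl; auto. rewrite IHn; auto. Qed.

Lemma psum_ext g g' n :
  (forall k, (k < n)%nat -> g k = g' k) -> psum g n = psum g' n.
Proof. induction n; simpl; intros E; auto. rewrite IHn, E; auto. Qed.

Lemma psum_add_range g a b : psum g (a + b) = psum g a + psum (fun j => g (a + j)%nat) b.
Proof.
  induction b; simpl. rewrite Nat.add_0_r; ring.
  rewrite Nat.add_succ_r; simpl; rewrite IHb; ring.
Qed.

Lemma psum_nonneg g n : (forall k, 0 <= g k) -> 0 <= psum g n.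
Proof. intros Hg; induction n; simpl; [lra|]. specialize (Hg n). lra. Qed.

Lemma psum_mono g m n : (forall k, 0 <= g k) -> (m <= n)%nat -> psum g m <= psum g n.
Proof.
  intros Hg Hmn. replace n with (m + (n - m))%nat by lia. rewrite psum_add_range.
  pose proof (psum_nonneg (fun j => g (m + j)%nat) (n - m) ltac:(intros; apply Hg)). lra.
Qed.

Lemma psum_le g g' n : (forall k, g k <= g' k) -> psum g n <= psum g' n.
Proof. intros E; induction n; simpl; [lra|]. specialize (E n); lra. Qed.

Lemma psum_plus g g' n : psum (fun k => g k + g' k) n = psum g n + psum g' n.
Proof. induction n; simpl. ring. rewrite IHn; ring. Qed.

Lemma psum_scal c g n : psum (fun k => c * g k) n = c * psum g n.
Proof. induction n; simpl. ring. rewrite IHn; ring. Qed.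

Lemma psum_const c n : psum (fun _ => c) n = INR n * c.
Proof. induction n; simpl psum. simpl; ring. rewrite IHn, S_INR; ring. Qed.

Lemma psum_pairs g n : psum g (2 * n) = psum (fun k => g (2 * k)%nat + g (S (2 * k))) n.
Proof.
  induction n; [reflexivity|].
  replace (2 * S n)%nat with (S (S (2 * n))) by lia.
  change (psum g (S (S (2 * n)))) with (psum g (2 * n) + g (2 * n)%nat + g (S (2 * n))).
  rewrite IHn. cbn [psum]. ring.
Qed.

Lemma psum_odd_le g n : (forall k, 0 <= g k) ->
  psum (fun k => g (S (2 * k))) n <= psum g (2 * n).
Proof.
  intros Hg. rewrite psum_pairs. apply psum_le. intro k. specialize (Hg (2 * k)%nat). lra.
Qed.

Lemma sum_f_R0_psum g n : sum_f_R0 g n = psum g (S n).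
Proof. induction n; simpl. ring. rewrite IHn; simpl; ring. Qed.

(* Cauchy condensation: a sum over the dyadic blocks 2^j <= k+1 < 2^(j+1) of a
   quantity depending only on the block index j. *)
Lemma psum_dyadic_blocks (g : nat -> R) J :
  psum (fun k => g (Nat.log2 (S k))) (2 ^ J - 1)%nat = psum (fun j => 2 ^ j * g j) J.
Proof.
  induction J; [reflexivity|].
  assert (P : (1 <= 2 ^ J)%nat) by (pose proof (Nat.pow_gt_lin_r 2 J); lia).
  replace (2 ^ S J - 1)%nat with ((2 ^ J - 1) + 2 ^ J)%nat by (rewrite Nat.pow_succ_r'; lia).
  rewrite psum_add_range, IHJ. cbn [psum]. f_equal.
  rewrite (psum_ext _ (fun _ => g J)).
  - rewrite psum_const, pow_INR. replace (INR 2) with 2 by (simpl; ring). ring.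
  - intros j Hj. f_equal. apply Nat.log2_unique; [lia|]. rewrite Nat.pow_succ_r'. lia.
Qed.

Lemma psum_geometric q n : 0 <= q < 1 -> psum (fun k => q ^ k) n <= / (1 - q).
Proof.
  intros Hq. assert (E : psum (fun k => q ^ k) n * (1 - q) = 1 - q ^ n).
  { induction n; simpl. ring. rewrite Rmult_plus_distr_r, IHn. ring. }
  assert (0 <= q ^ n) by (apply pow_le; lra).
  apply Rmult_le_reg_r with (1 - q); [lra|]. rewrite E. field_simplify; lra.
Qed.

(** * Orthogonal projections *)

Section Projections.
Context {H : InnerProductSpace}.

(* Each e_i is a unit vector or zero (Gram-Schmidt on a dependent sequence
   produces zero vectors). *)
Definition unit_or_zero (e : nat -> H) : Prop :=
  forall i, inner H (e i) (e i) = Cone \/ e i = vzero H.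

Definition orthogonal_upto (e : nat -> H) (n : nat) : Prop :=
  forall i j, (i < n)%nat -> (j < n)%nat -> i <> j -> inner H (e i) (e j) = Czero.

Definition proj (e : nat -> H) (n : nat) (x : H) : H :=
  vsum (fun k => vscal H (inner H x (e k)) (e k)) n.

Definition bessel_sum (e : nat -> H) (x : H) (n : nat) : R :=
  psum (fun k => Cmod (inner H x (e k)) ^ 2) n.

Variables (e : nat -> H) (n : nat).
Hypotheses (He_unit : unit_or_zero e) (He_orth : orthogonal_upto e n).

Lemma inner_proj_basis x j : (j < n)%nat -> inner H (proj e n x) (e j) = inner H x (e j).
Proof.
  intros Hj. unfold proj. rewrite inner_vsum_l, (Csum_single _ _ j Hj).
  - rewrite inner_scall. destruct (He_unit j) as [E|E]; rewrite E.
    + destruct (inner H x (e j)); cplx_eq.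
    + rewrite inner_0r; cplx_eq.
  - intros k Hk Hkj. rewrite inner_scall, (He_orth k j); auto. cplx_eq.
Qed.

Lemma resid_orth x j : (j < n)%nat -> inner H (vsub H x (proj e n x)) (e j) = Czero.
Proof. intros Hj. rewrite inner_subl, inner_proj_basis; auto. cplx_eq. Qed.

Lemma resid_orth_comb x c :
  inner H (vsub H x (proj e n x)) (vsum (fun k => vscal H (c k) (e k)) n) = Czero.
Proof.
  rewrite inner_vsum_r. apply Csum_zero. intros k Hk.
  rewrite inner_scalr, resid_orth; auto. cplx_eq.
Qed.

Lemma pythagoras x :
  re (inner H (vsub H x (proj e n x)) (vsub H x (proj e n x))) =
  re (inner H x x) - bessel_sum e x n.
Proof.
  assert (Z : inner H (vsub H x (proj e n x)) (proj e n x) = Czero) by apply resid_orth_comb.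
  rewrite inner_subl in Z. injection Z as Z1 _.
  assert (B : re (inner H (proj e n x) x) = bessel_sum e x n).
  { unfold proj, bessel_sum. rewrite inner_vsum_l, re_Csum. apply psum_ext. intros k _.
    rewrite inner_scall, (inner_conj H (e k) x), Cmod_sq. simpl. ring. }
  rewrite re_inner_sub_self, (re_inner_sym x (proj e n x)) in *. lra.
Qed.

Lemma bessel x : bessel_sum e x n <= re (inner H x x).
Proof. pose proof (pythagoras x). pose proof (inner_pos H (vsub H x (proj e n x))). lra. Qed.

Lemma best_approximation x c :
  re (inner H (vsub H x (proj e n x)) (vsub H x (proj e n x))) <=
  re (inner H (vsub H x (vsum (fun k => vscal H (c k) (e k)) n))
               (vsub H x (vsum (fun k => vscal H (c k) (e k)) n))).
Proof.
  set (P := proj e n x). set (y := vsum (fun k => vscal H (c k) (e k)) n).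
  assert (Z1 : inner H (vsub H x P) P = Czero) by apply resid_orth_comb.
  assert (Z2 : inner H (vsub H x P) y = Czero) by apply resid_orth_comb.
  rewrite inner_subl in Z1, Z2. injection Z1 as A1 _. injection Z2 as A2 _.
  rewrite !re_inner_sub_self. pose proof (inner_pos H (vsub H P y)) as Q.
  rewrite re_inner_sub_self in Q. lra.
Qed.

End Projections.

(** * Gram-Schmidt orthonormalization *)

Section GramSchmidt.
Context {H : InnerProductSpace}.

(* v / |v|, and 0 when v = 0. *)
Definition normalize (v : H) : H :=
  vscal H (mkC (/ sqrt (re (inner H v v))) 0) v.

Lemma normalize_unit_or_zero (v : H) :
  inner H (normalize v) (normalize v) = Cone \/ normalize v = vzero H.
Proof.
  unfold normalize. destruct (Req_dec (re (inner H v v)) 0) as [Z|NZ].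
  - right. rewrite (inner_def H v Z). apply vscal_0r.
  - left. rewrite inner_scall, inner_scalr.
    pose proof (inner_pos H v). pose proof (im_inner_self v).
    set (r := re (inner H v v)) in *.
    assert (0 < sqrt r) by (apply sqrt_lt_R0; lra).
    assert (R2 : sqrt r * sqrt r = r) by (apply sqrt_sqrt; lra).
    destruct (inner H v v) as [a b]; simpl in *. subst r b.
    cplx_eq. field_simplify; [|lra]. rewrite <- R2 at 1. field. lra.
Qed.

Lemma normalize_inverse (v : H) :
  vscal H (mkC (sqrt (re (inner H v v))) 0) (normalize v) = v.
Proof.
  unfold normalize. destruct (Req_dec (re (inner H v v)) 0) as [Z|NZ].
  - rewrite (inner_def H v Z), !vscal_0r. reflexivity.
  - rewrite vscalA. pose proof (inner_pos H v).
    assert (0 < sqrt (re (inner H v v))) by (apply sqrt_lt_R0; lra).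
    replace (Cmul _ _) with Cone by (cplx_eq; field; lra). apply vscal1.
Qed.

Lemma normalize_diag_nonzero (T : H -> H) (u : H) :
  (forall a y, T (vscal H a y) = vscal H a (T y)) ->
  inner H (T u) u <> Czero -> inner H (T (normalize u)) (normalize u) <> Czero.
Proof.
  intros Hscal Hu. unfold normalize. rewrite diag_real_scale by exact Hscal.
  pose proof (inner_self_pos u (T u) Hu) as Pu.
  assert (Ps : 0 < / sqrt (re (inner H u u))) by (apply Rinv_0_lt_compat, sqrt_lt_R0; auto).
  set (s := / sqrt (re (inner H u u))) in *.
  destruct (inner H (T u) u) as [a b]; simpl. intro E. injection E as E1 E2.
  apply Hu. apply Rmult_integral in E1, E2.
  destruct E1 as [E1| ->]; [nra|]. destruct E2 as [E2| ->]; [nra|]. reflexivity.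
Qed.

Fixpoint gs_upto (d : nat -> H) (n : nat) : nat -> H :=
  match n with
  | O => fun _ => vzero H
  | S m => fun k => if Nat.eqb k m then normalize (vsub H (d m) (proj (gs_upto d m) m (d m)))
                    else gs_upto d m k
  end.

Definition gs (d : nat -> H) (k : nat) : H := gs_upto d (S k) k.

Lemma gs_upto_gs d m k : (k < m)%nat -> gs_upto d m k = gs d k.
Proof.
  induction m; intros Hk; [lia|]. simpl.
  destruct (Nat.eqb_spec k m) as [->|Hne].
  - unfold gs; simpl; rewrite Nat.eqb_refl; reflexivity.
  - apply IHm; lia.
Qed.

Lemma gs_eq d m : gs d m = normalize (vsub H (d m) (proj (gs d) m (d m))).
Proof.
  unfold gs at 1. simpl. rewrite Nat.eqb_refl. unfold proj.
  do 2 f_equal. apply vsum_ext. intros k Hk. rewrite gs_upto_gs; auto.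
Qed.

Lemma gs_first d : gs d 0 = normalize (d 0%nat).
Proof. rewrite gs_eq. unfold proj, vsub. simpl. rewrite vopp_0, vadd0. reflexivity. Qed.

Lemma gs_unit_or_zero d : unit_or_zero (gs d).
Proof. intros i. rewrite gs_eq. apply normalize_unit_or_zero. Qed.

Lemma gs_orthogonal d n : orthogonal_upto (gs d) n.
Proof.
  induction n; [intros i j Hi; lia|].
  assert (K : forall j, (j < n)%nat -> inner H (gs d n) (gs d j) = Czero).
  { intros j Hj. rewrite (gs_eq d n). unfold normalize. rewrite inner_scall.
    rewrite resid_orth; auto. cplx_eq. apply gs_unit_or_zero. }
  intros i j Hi Hj Hij.
  destruct (Nat.eq_dec i n) as [->|Hi']; destruct (Nat.eq_dec j n) as [->|Hj'].
  - congruence.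
  - apply K; lia.
  - rewrite inner_conj, K by lia. cplx_eq.
  - apply IHn; lia.
Qed.

Lemma gs_span d n : exists c, d n = vsum (fun k => vscal H (c k) (gs d k)) (S n).
Proof.
  set (v := vsub H (d n) (proj (gs d) n (d n))).
  exists (fun k => if Nat.ltb k n then inner H (d n) (gs d k)
                   else mkC (sqrt (re (inner H v v))) 0).
  simpl. rewrite Nat.ltb_irrefl, (gs_eq d n). fold v. rewrite normalize_inverse.
  rewrite (vsum_ext _ (fun k => vscal H (inner H (d n) (gs d k)) (gs d k))).
  2:{ intros k Hk. apply Nat.ltb_lt in Hk. rewrite Hk. reflexivity. }
  fold (proj (gs d) n (d n)). unfold v, vsub.
  rewrite (vaddC H (d n)), vaddA, vaddN, vaddC, vadd0. reflexivity.
Qed.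

Lemma gs_dense_bessel (d : nat -> H) :
  (forall x eps, eps > 0 -> exists m, vnorm H (vsub H x (d m)) < eps) ->
  forall x eps, eps > 0 -> exists N, re (inner H x x) - bessel_sum (gs d) x N < eps.
Proof.
  intros Hd x eps He. destruct (Hd x (sqrt eps)) as [m Hm]; [apply sqrt_lt_R0; lra|].
  destruct (gs_span d m) as [c Hc]. exists (S m).
  rewrite <- (pythagoras (gs d) (S m) (gs_unit_or_zero d) (gs_orthogonal d _)).
  eapply Rle_lt_trans; [apply (best_approximation _ _ (gs_unit_or_zero d) (gs_orthogonal d _))|].
  rewrite <- Hc, <- vnorm_sq.
  pose proof (sqrt_pos (re (inner H (vsub H x (d m)) (vsub H x (d m))))) as Hn. fold (vnorm H (vsub H x (d m))) in Hn.
  pose proof (sqrt_sqrt eps ltac:(lra)). nra.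
Qed.

End GramSchmidt.

Lemma nonneg_series_limit (h : nat -> R) (M : R) :
  (forall k, 0 <= h k) -> (forall n, psum h n <= M) ->
  exists L, infinite_sum h L /\ L <= M /\ forall n, psum h n <= L.
Proof.
  intros Hh HM.
  assert (G : Un_growing (fun n => sum_f_R0 h n)).
  { intro n. simpl. specialize (Hh (S n)). lra. }
  destruct (growing_cv _ G) as [L HS].
  { exists M. intros y [n ->]. rewrite sum_f_R0_psum. apply HM. }
  assert (Below : forall n, psum h n <= L).
  { intro n. apply Rle_trans with (psum h (S n)); [apply psum_mono; auto|].
    rewrite <- sum_f_R0_psum. apply (growing_ineq _ _ G HS). }
  exists L. split; [exact HS|]. split; [|exact Below].
  apply Rnot_lt_le. intro Lt. destruct (HS (L - M)) as [N HN]; [lra|].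
  specialize (HN N (le_n _)). rewrite sum_f_R0_psum in HN. specialize (HM (S N)).
  unfold Rdist in HN. apply Rabs_def2 in HN. lra.
Qed.

Lemma frame_of_partial_sums {H : InnerProductSpace} (f : nat -> H) (C1 C2 : R) :
  0 < C1 -> C1 <= C2 ->
  (forall x n, bessel_sum f x n <= C2 * re (inner H x x)) ->
  (forall x eps, eps > 0 -> exists n, C1 * re (inner H x x) - eps < bessel_sum f x n) ->
  is_frame H f.
Proof.
  intros HC1 HC12 Hup Hlow. exists C1, C2. split; [exact HC1|]. split; [exact HC12|].
  intro x. destruct (nonneg_series_limit (fun k => Cmod (inner H x (f k)) ^ 2)
                       (C2 * re (inner H x x))) as [L [HS [Sup Below]]].
  { intro; apply pow2_ge_0. }
  { apply Hup. }
  exists L. rewrite vnorm_sq. split; [exact HS|]. split; [|exact Sup].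
  apply Rnot_lt_le. intro Lt. destruct (Hlow x (C1 * re (inner H x x) - L)) as [n Hn]; [lra|].
  specialize (Below n). unfold bessel_sum in Hn. lra.
Qed.

Lemma rpow_nonneg (t p : R) : 0 <= rpow t p.
Proof. unfold rpow. destruct (Rlt_dec 0 t); [left; apply exp_pos | lra]. Qed.

Lemma not_in_lp_of_unbounded (p : R) (a : nat -> Cplx) :
  (forall M, exists n, M < psum (fun k => rpow (Cmod (a k)) p) n) -> ~ in_lp p a.
Proof.
  intros Hunb [L HS].
  assert (Hq : forall k, 0 <= rpow (Cmod (a k)) p) by (intro; apply rpow_nonneg).
  destruct (Hunb L) as [n Hn].
  assert (psum (fun k => rpow (Cmod (a k)) p) (S n) <= L).
  { rewrite <- sum_f_R0_psum. apply growing_ineq; [|exact HS].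
    intro m. simpl. specialize (Hq (S m)). lra. }
  pose proof (psum_mono _ n (S n) Hq (le_S _ _ (le_n _))). lra.
Qed.

(** * Polarization *)

Lemma polarization {H : InnerProductSpace} (T : H -> H) :
  (forall x y, T (vadd H x y) = vadd H (T x) (T y)) ->
  (forall a x, T (vscal H a x) = vscal H a (T x)) ->
  (forall u, inner H (T u) u = Czero) -> forall x, T x = vzero H.
Proof.
  intros Hadd Hscal Z x.
  assert (K : forall y, inner H (T x) y = Czero).
  { intros y.
    pose proof (Z (vadd H x y)) as E1.
    rewrite Hadd, inner_addl, !inner_addr, Z, Z in E1.
    pose proof (Z (vadd H x (vscal H (mkC 0 1) y))) as E2.
    rewrite Hadd, Hscal, inner_addl, !inner_addr, Z, inner_scall, !inner_scalr,
      inner_scall, Z in E2.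
    destruct (inner H (T x) y) as [a1 a2], (inner H (T y) x) as [b1 b2].
    unfold Cadd, Cmul, Czero, Cconj in *; simpl in *.
    injection E1 as E11 E12. injection E2 as E21 E22. cplx_eq. }
  apply inner_def. rewrite K. reflexivity.
Qed.

Lemma nonzero_diagonal {H : InnerProductSpace} (T : H -> H) :
  (forall x y, T (vadd H x y) = vadd H (T x) (T y)) ->
  (forall a x, T (vscal H a x) = vscal H a (T x)) ->
  (exists x, T x <> vzero H) -> exists u, inner H (T u) u <> Czero.
Proof.
  intros Hadd Hscal [x Hx]. apply NNPP. intro N. apply Hx.
  apply (polarization T Hadd Hscal). intro u. apply NNPP. intro Hu. apply N. exists u; exact Hu.
Qed.

(** * Dyadic weights: summable, but not p-summable *)

Section DyadicWeights.
Variable p : R.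
Hypothesis Hp : 0 < p < 1.

Definition dyadic_ratio : R := Rpower (/ 2) (/ p).
Definition dyadic_weight (k : nat) : R := dyadic_ratio ^ Nat.log2 (S k).

Lemma dyadic_ratio_pos : 0 < dyadic_ratio.
Proof. unfold dyadic_ratio, Rpower. apply exp_pos. Qed.

(* 2r < 1 because 1/p > 1: this is where p < 1 is used. *)
Lemma dyadic_ratio_small : 2 * dyadic_ratio < 1.
Proof.
  unfold dyadic_ratio, Rpower. rewrite ln_Rinv by lra.
  assert (L : 0 < ln 2) by (pose proof ln_lt_2; lra).
  assert (1 < / p) by (rewrite <- Rinv_1; apply Rinv_lt_contravar; lra).
  assert (Lt : exp (/ p * - ln 2) < exp (- ln 2)) by (apply exp_increasing; nra).
  rewrite exp_Ropp, exp_ln in Lt by lra. lra.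
Qed.

Lemma dyadic_weight_pos k : 0 < dyadic_weight k.
Proof. unfold dyadic_weight. apply pow_lt, dyadic_ratio_pos. Qed.

(* sum_(k<n) t_k <= sum_j (2r)^j <= 1/(1-2r). *)
Lemma dyadic_weight_sum n : psum dyadic_weight n <= / (1 - 2 * dyadic_ratio).
Proof.
  pose proof dyadic_ratio_small. pose proof dyadic_ratio_pos.
  assert (n <= 2 ^ n - 1)%nat by (pose proof (Nat.pow_gt_lin_r 2 n); lia).
  apply Rle_trans with (psum dyadic_weight (2 ^ n - 1)).
  { apply psum_mono; auto. intros; left; apply dyadic_weight_pos. }
  unfold dyadic_weight. rewrite (psum_dyadic_blocks (fun k => dyadic_ratio ^ k)).
  rewrite (psum_ext _ (fun k => (2 * dyadic_ratio) ^ k)); [apply psum_geometric; lra|].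
  intros; rewrite Rpow_mult_distr; ring.
Qed.

Lemma dyadic_weight_pow k : Rpower (dyadic_weight k) p = (/ 2) ^ Nat.log2 (S k).
Proof.
  unfold dyadic_weight, dyadic_ratio.
  rewrite <- Rpower_pow by (unfold Rpower; apply exp_pos).
  rewrite !Rpower_mult, <- Rpower_pow by lra. f_equal. field. lra.
Qed.

(* For c <> 0 the sequence (t_k c) is not in l^p: each dyadic block
   contributes |c|^p to the sum of p-th powers. *)
Lemma dyadic_multiple_unbounded (c : Cplx) : c <> Czero ->
  forall M, exists n,
    M < psum (fun k => rpow (Cmod (mkC (dyadic_weight k * re c) (dyadic_weight k * im c))) p) n.
Proof.
  intros Hc M. pose proof (Cmod_pos c Hc) as Pm.
  set (mp := Rpower (Cmod c) p).
  assert (Pmp : 0 < mp) by (unfold mp, Rpower; apply exp_pos).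
  destruct (INR_archimed mp M Pmp) as [J HJ].
  exists (2 ^ J - 1)%nat.
  rewrite (psum_ext _ (fun k => (fun j => (/ 2) ^ j * mp) (Nat.log2 (S k)))).
  - pose proof (psum_dyadic_blocks (fun j => (/ 2) ^ j * mp) J) as Blocks. cbv beta in Blocks.
    rewrite Blocks, (psum_ext _ (fun _ => mp)), psum_const; [lra|].
    intros j _. rewrite <- Rmult_assoc, <- Rpow_mult_distr, Rinv_r, pow1 by lra. ring.
  - intros k _. pose proof (dyadic_weight_pos k).
    rewrite Cmod_scale by lra. unfold rpow.
    destruct (Rlt_dec 0 (dyadic_weight k * Cmod c)) as [_|N]; [|exfalso; apply N; nra].
    rewrite <- Rpower_mult_distr, dyadic_weight_pow; auto.
Qed.

End DyadicWeights.

(** * An orthonormal system augmented by a summable multiple of e_0 *)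

Section Augmented.
Context {H : InnerProductSpace}.

Definition augment (e : nat -> H) (w : nat -> R) (n : nat) : H :=
  if Nat.even n then e (Nat.div2 n)
  else vscal H (mkC (sqrt (w (Nat.div2 n))) 0) (e 0%nat).

Lemma augment_even e w k : augment e w (2 * k) = e k.
Proof. unfold augment. rewrite Nat.even_even, Nat.div2_double. reflexivity. Qed.

Lemma augment_odd e w k :
  augment e w (S (2 * k)) = vscal H (mkC (sqrt (w k)) 0) (e 0%nat).
Proof.
  unfold augment. replace (S (2 * k)) with (2 * k + 1)%nat by lia.
  rewrite Nat.even_odd, Nat.div2_odd'. reflexivity.
Qed.

Variables (e : nat -> H) (w : nat -> R) (B : R).
Hypotheses (He_unit : unit_or_zero e) (He_orth : forall n, orthogonal_upto e n)
  (He_total : forall x eps, eps > 0 -> exists N, re (inner H x x) - bessel_sum e x N < eps)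
  (Hw_pos : forall k, 0 <= w k) (Hw_sum : forall n, psum w n <= B).

Lemma augment_bessel_sum x n :
  bessel_sum (augment e w) x (2 * n) =
  bessel_sum e x n + Cmod (inner H x (e 0%nat)) ^ 2 * psum w n.
Proof.
  unfold bessel_sum. rewrite psum_pairs, <- psum_scal, <- psum_plus. apply psum_ext.
  intros k _. rewrite augment_even, augment_odd, inner_scalr, !Cmod_sq. simpl.
  set (s := sqrt (w k)). rewrite <- (sqrt_sqrt (w k) (Hw_pos k)). fold s. ring.
Qed.

Lemma augment_frame : is_frame H (augment e w).
Proof.
  assert (HB : 0 <= B) by apply (Hw_sum 0).
  apply frame_of_partial_sums with (C1 := 1) (C2 := 1 + B); [lra | lra | |].
  - intros x n. apply Rle_trans with (bessel_sum (augment e w) x (2 * n)).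
    { apply psum_mono; [intro; apply pow2_ge_0 | lia]. }
    rewrite augment_bessel_sum.
    pose proof (bessel e n He_unit (He_orth n) x) as Bn.
    pose proof (bessel e 1 He_unit (He_orth 1) x) as B1. unfold bessel_sum in B1; simpl in B1.
    pose proof (psum_nonneg w n Hw_pos). pose proof (Hw_sum n).
    pose proof (pow2_ge_0 (Cmod (inner H x (e 0%nat)))). nra.
  - intros x eps He. destruct (He_total x eps He) as [N HN]. exists (2 * N)%nat.
    rewrite augment_bessel_sum.
    pose proof (psum_nonneg w N Hw_pos). pose proof (pow2_ge_0 (Cmod (inner H x (e 0%nat)))).
    nra.
Qed.

End Augmented.

Theorem proposition19 (H : InnerProductSpace) (Hc : complete H) (Hs : separable H)
  (p : R) (hp0 : 0 < p) (hp1 : p < 1)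
  (T : H -> H) (HT : bounded_linear H T) (Tnz : exists x : H, T x <> vzero H) :
  exists f : nat -> H, is_frame H f /\
    ~ in_lp p (fun n => inner H (T (f n)) (f n)).
Proof.
  destruct HT as [Hadd [Hscal _]].
  destruct (nonzero_diagonal T Hadd Hscal Tnz) as [u Hu].
  destruct Hs as [d0 Hd0].
  (* Gram-Schmidt on u, d0 0, d0 1, ...: a dense sequence starting at u. *)
  set (d := fun n => match n with O => u | S m => d0 m end).
  assert (Hd : forall x eps, eps > 0 -> exists m, vnorm H (vsub H x (d m)) < eps).
  { intros x eps He. destruct (Hd0 x eps He) as [m Hm]. exists (S m). exact Hm. }
  set (e := gs d). set (w := dyadic_weight p).
  assert (Hc0 : inner H (T (e 0%nat)) (e 0%nat) <> Czero).
  { unfold e. rewrite gs_first. apply normalize_diag_nonzero; auto. }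
  exists (augment e w). split.
  - apply augment_frame with (B := / (1 - 2 * dyadic_ratio p)).
    + apply gs_unit_or_zero.
    + apply gs_orthogonal.
    + apply gs_dense_bessel, Hd.
    + intro k. left. apply dyadic_weight_pos.
    + apply dyadic_weight_sum. lra.
  - (* The odd terms <T f_(2k+1), f_(2k+1)> = t_k <T e_0, e_0> already diverge in l^p. *)
    apply not_in_lp_of_unbounded. intro M.
    destruct (dyadic_multiple_unbounded p (conj hp0 hp1) _ Hc0 M) as [n Hn].
    exists (2 * n)%nat. eapply Rlt_le_trans; [exact Hn|].
    eapply Rle_trans; [|apply psum_odd_le; intro; apply rpow_nonneg].
    right. apply psum_ext. intros k _.
    rewrite augment_odd, diag_real_scale, sqrt_sqrt by (auto; left; apply dyadic_weight_pos).
    reflexivity.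
Qed.
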